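(* Let $p$ be a prime, $\mathbb{F}=\mathbb{F}_p$, and let $f\in\mathbb{F}[x_1,\dots,x_n]$ be a homogeneous polynomial of degree at most $p-1$. Let $Z=\{x\in\mathbb{F}^n: f(x)=0\}$ and let $a\in\mathbb{F}\setminus\{0\}$ be such that $S=\{x\in\mathbb{F}^n: f(x)=a\}$ is nonempty. Then the $p$-dimensional rectangle $Z\times S\times\cdots\times S$ contains no line with direction $d\in Z$.
   Context: The line through $x\in\mathbb{F}^n$ in direction $d\in\mathbb{F}^n$ is $\ell_{x,d}=(x+\lambda d)_{\lambda\in\mathbb{F}}$; a rectangle $T_1\times\cdots\times T_p$ contains $\ell_{x,d}$ if $x+\lambda d\in T_{\lambda+1}$ for every $\lambda\in\{0,1,\dots,p-1\}$. *)

From HB Require Import structures.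
From mathcomp Require Import all_boot all_order all_algebra.
From mathcomp Require Import mpoly.
Set Implicit Arguments. Unset Strict Implicit. Unset Printing Implicit Defensive.
Import GRing.Theory.
Local Open Scope ring_scope.

Definition line_pt (F : ringType) (n : nat) (x d : 'I_n -> F) (lam : F) : 'I_n -> F :=
  fun i => x i + lam * d i.

(* The rectangle T_1 x ... x T_p (T indexed by 1..p) contains the line l_{x,d}
   iff x + lam d \in T_(lam+1) for every lam in {0,1,...,p-1}, where the natural
   number lam is viewed in F via lam%:R. *)
Definition rect_contains_line (F : ringType) (n p : nat)
    (T : nat -> ('I_n -> F) -> Prop) (x d : 'I_n -> F) : Prop :=
  forall lam : nat, (lam < p)%N -> T lam.+1 (line_pt x d lam%:R).

Definition zero_set (F : comRingType) (n : nat) (f : {mpoly F[n]}) : ('I_n -> F) -> Prop :=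
  fun x => f.@[x] = 0.
Definition level_set (F : comRingType) (n : nat) (f : {mpoly F[n]}) (a : F) : ('I_n -> F) -> Prop :=
  fun x => f.@[x] = a.

Definition ZSS_rect (F : comRingType) (n : nat) (f : {mpoly F[n]}) (a : F) :
    nat -> ('I_n -> F) -> Prop :=
  fun k => if k == 1%N then zero_set f else level_set f a.

From HB Require Import structures.
From mathcomp Require Import all_boot all_order all_algebra.
From mathcomp Require Import mpoly.
From mathcomp Require Import zify.
Import GRing.Theory.
Local Open Scope ring_scope.

(* Along the line x + t d, f restricts to a polynomial G(t) of degree at most
   k = deg f <= p - 1 whose coefficient of t^k is f(d), by homogeneity.  Since
   d lies in Z this coefficient vanishes, so deg G < p - 1.  If the rectangle
   contained the line, G would equal a at the p - 1 nonzero points of F_p, hence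
   be the constant a; but G(0) = f(x) = 0. *)

Section TopCoefficient.
Context {R : nzRingType}.
Implicit Types (p q : {poly R}) (a b : nat).

Lemma size_polyM_leqS p q a b :
  (size p <= a.+1)%N -> (size q <= b.+1)%N -> (size (p * q)%R <= (a + b).+1)%N.
Proof.
move=> hp hq; apply: leq_trans (size_polyMleq p q) _.
by move: hp hq; case: (size p) => [|sp] /=; lia.
Qed.

Lemma coefM_top p q a b :
  (size p <= a.+1)%N -> (size q <= b.+1)%N -> (p * q)`_(a + b) = p`_a * q`_b.
Proof.
move=> hp hq; rewrite coefM (bigD1 (Ordinal (leq_addr b a : (a < (a + b).+1)%N))) //=.
rewrite addKn big1 ?addr0 // => -[j /= lt_j] ne_ja.
have [lt_ja | lt_aj | eq_ja] := ltngtP j a.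
- by rewrite [q`__](leq_sizeP _ _ hq) ?mulr0 //; lia.
- by rewrite [p`__](leq_sizeP _ _ hp) ?mul0r.
- by move: ne_ja; rewrite -val_eqE /= eq_ja eqxx.
Qed.

Lemma size_prod_leqS (I : Type) (r : seq I) (P : I -> {poly R}) (e : I -> nat) :
  (forall i, size (P i) <= (e i).+1)%N ->
  (size (\prod_(i <- r) P i)%R <= (\sum_(i <- r) e i).+1)%N.
Proof.
move=> hP; elim: r => [|i r IH]; first by rewrite !big_nil size_poly1.
by rewrite !big_cons size_polyM_leqS.
Qed.

Lemma coef_prod_top (I : Type) (r : seq I) (P : I -> {poly R}) (e : I -> nat) :
  (forall i, size (P i) <= (e i).+1)%N ->
  (\prod_(i <- r) P i)`_(\sum_(i <- r) e i) = \prod_(i <- r) (P i)`_(e i).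
Proof.
move=> hP; elim: r => [|i r IH]; first by rewrite !big_nil coefC.
by rewrite !big_cons coefM_top ?IH ?size_prod_leqS.
Qed.

Lemma size_exp_leqS p e : (size p <= 2)%N -> (size (p ^+ e)%R <= e.+1)%N.
Proof.
move=> hp; apply: leq_trans (size_poly_exp_leq p e) _; rewrite ltnS.
by rewrite -[leqRHS]mul1n leq_mul2r; case: (size p) hp => [|[|[]]]; rewrite ?orbT.
Qed.

Lemma coef_exp_top p e : (size p <= 2)%N -> (p ^+ e)`_e = p`_1 ^+ e.
Proof.
move=> hp; elim: e => [|e IH]; first by rewrite !expr0 coefC.
by rewrite !exprSr -addn1 coefM_top ?IH ?size_exp_leqS.
Qed.

End TopCoefficient.

Section LinearSubstitution.
Context {R : comNzRingType} {n : nat} {h : 'I_n -> {poly R}}.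
Hypothesis size_h : forall i, (size (h i) <= 2)%N.

Lemma size_mmap1_leq m : (size (mmap1 h m) <= (mdeg m).+1)%N.
Proof. by rewrite /mmap1 mdegE; apply: size_prod_leqS => i; apply: size_exp_leqS. Qed.

Lemma coef_mmap1_mdeg m : (mmap1 h m)`_(mdeg m) = \prod_(i < n) (h i)`_1 ^+ m i.
Proof.
rewrite /mmap1 mdegE coef_prod_top => [|i]; last exact: size_exp_leqS.
by apply: eq_bigr => i _; rewrite coef_exp_top.
Qed.

Context {k : nat} {f : {mpoly R[n]}}.
Hypothesis homf : f \is k.-homog.

Lemma size_mmap_homog : (size (mmap polyC h f) <= k.+1)%N.
Proof.
rewrite /mmap big_seq; apply: (big_ind (fun q : {poly R} => size q <= k.+1)%N).
- by rewrite size_poly0.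
- by move=> q1 q2 h1 h2; apply: leq_trans (size_polyD _ _) _; rewrite geq_max h1.
- move=> m /(dhomog_mf homf) <-.
  by apply: (@size_polyM_leqS _ _ _ 0); [apply: size_polyC_leq1 | apply: size_mmap1_leq].
Qed.

Lemma coef_mmap_homog : (mmap polyC h f)`_k = f.@[fun i => (h i)`_1].
Proof.
rewrite /mmap coef_sum mevalE; apply: eq_big_seq => m /(dhomog_mf homf) <-.
by rewrite coefCM coef_mmap1_mdeg.
Qed.

End LinearSubstitution.

Section PolyOnLine.
Context {R : comNzRingType} {n : nat} (f : {mpoly R[n]}) (x d : 'I_n -> R).

Definition poly_on_line : {poly R} := mmap polyC (fun i => d i *: 'X + (x i)%:P) f.

Lemma horner_poly_on_line lam : poly_on_line.[lam] = f.@[line_pt x d lam].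
Proof.
rewrite /poly_on_line /mmap mevalE horner_sum; apply: eq_bigr => m _.
rewrite hornerCM /mmap1 horner_prod; congr (_ * _); apply: eq_bigr => i _.
by rewrite horner_exp hornerD hornerZ hornerX hornerC addrC mulrC.
Qed.

Lemma size_poly_on_line k :
  f \is k.-homog -> f.@[d] = 0 -> (size poly_on_line <= k)%N.
Proof.
have size_line i : (size (d i *: 'X + (x i)%:P)%R <= 2)%N.
  apply: leq_trans (size_polyD _ _) _; rewrite geq_max (leq_trans (size_polyC_leq1 _)) // andbT.
  by apply: leq_trans (size_scale_leq _ _) _; rewrite size_polyX.
move=> homf fd0; apply/leq_sizeP => j; rewrite leq_eqVlt => /orP[/eqP <- | lt_kj].
- rewrite coef_mmap_homog // -[RHS]fd0; apply: meval_eq => i.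
  by rewrite coefD coefZ coefX coefC mulr1 addr0.
- by move/leq_sizeP: (size_mmap_homog size_line homf); apply.
Qed.

End PolyOnLine.

Lemma poly_const_on_nonzero {F : finFieldType} (q : {poly F}) (c : F) :
  (size q < #|F|)%N -> (forall z, z != 0 -> q.[z] = c) -> q = c%:P.
Proof.
move=> size_q qc; apply: subr0_eq.
apply: (roots_geq_poly_eq0 (rs := enum (predC1 0))); last first.
- rewrite -cardE cardC1 (leq_trans (size_polyD _ _)) // geq_max size_polyN.
  have F_gt1 := card_finNzRing_gt1 F; have F_gt0 := ltnW F_gt1.
  apply/andP; split; rewrite -ltnS prednK //.
  exact: leq_ltn_trans (size_polyC_leq1 c) F_gt1.
- exact: enum_uniq.
- by apply/allP => z; rewrite mem_enum => /qc qz; rewrite /root hornerD hornerN hornerC qz subrr.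
Qed.

Theorem lemma3p4 (p n : nat) (hp : prime p) (f : {mpoly 'F_p[n]})
  (hhom : exists2 k : nat, (k <= p.-1)%N & f \is k.-homog)
  (a : 'F_p) (ha : a != 0)
  (hS : exists x : 'I_n -> 'F_p, level_set f a x) :
  forall x d : 'I_n -> 'F_p, zero_set f d ->
    ~ rect_contains_line p (ZSS_rect f a) x d.
Proof.
(* hS is redundant: a line contained in the rectangle meets S at t = 1. *)
move=> x d fd0 on_line; have [k le_k_p homf] := hhom.
set G := poly_on_line f x d.
have G0 : G.[0] = 0 by rewrite horner_poly_on_line; apply: (on_line 0%N (prime_gt0 hp)).
have Ga z : z != 0 -> G.[z] = a.
  move=> nz_z; have lt_z_p : (z < p)%N by rewrite -[X in (_ < X)%N](Fp_cast hp).
  by have := on_line z lt_z_p; rewrite /ZSS_rect eqSS natr_Zp ifN // horner_poly_on_line.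
have size_G : (size G < #|'F_p|)%N.
  rewrite card_Fp // (leq_ltn_trans (size_poly_on_line f x d k homf fd0)) //.
  by apply: leq_ltn_trans le_k_p _; rewrite prednK ?prime_gt0.
have G_const : G = a%:P by apply: poly_const_on_nonzero.
by move: G0; rewrite G_const hornerC => /eqP; rewrite (negPf ha).
Qed.
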